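(* Let $\mathcal T$ be an admissible labeled tree. For an unordered pair of labels $\{i,j\}$ let $b_{ij}$ be the number of edges of $\mathcal T$ whose endpoints have labels $i$ and $j$. Then \[ \sum_{\{i,j\}:\,b_{ij}>2} b_{ij}\le 6\,\Delta(\mathcal T). \]
   Context: Setting: $T$ is a finite rooted tree with levels (root at level $t$, children of a level-$s$ vertex at level $s-1$). A labeling gives each vertex $v$ a label $\ell(v)\in[N]$. The labeled tree $\mathcal T$ is admissible if (i) whenever $u$ is the parent of $v$ and $v$ the parent of $w$, $\ell(u)\ne\ell(w)$; (ii) for every edge $\{u,v\}$ there is another edge $\{u',v'\}$ with $\{\ell(u'),\ell(v')\}=\{\ell(u),\ell(v)\}$. $|V(\mathcal T)|$ is the number of distinct labels used (including the root's), $|E(\mathcal T)|$ the number of edges, and $\Delta(\mathcal T)=\tfrac12|E(\mathcal T)|-|V(\mathcal T)|+1$. *)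

From mathcomp Require Import all_boot all_order all_algebra.
Set Implicit Arguments. Unset Strict Implicit. Unset Printing Implicit Defensive.
Import Order.TTheory GRing.Theory Num.Theory.

(* Edges are the pairs {v, par v} for v <> root (indexed by the child v). *)
Definition is_rooted_tree (V : finType) (root : V) (par : V -> V) : Prop :=
  par root = root /\ forall v : V, exists k, iter k par v = root.

Definition is_leveling (V : finType) (root : V) (par : V -> V)
    (t : nat) (lev : V -> nat) : Prop :=
  lev root = t /\ forall v : V, v != root -> lev (par v) = (lev v).+1.

Definition edges (V : finType) (root : V) : {set V} := [set v | v != root].

Definition edge_has_labels (V : finType) (N : nat) (par : V -> V)
    (l : V -> 'I_N) (v : V) (i j : 'I_N) : bool :=
  ((l v == i) && (l (par v) == j)) || ((l v == j) && (l (par v) == i)).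

Definition admissible (V : finType) (N : nat) (root : V) (par : V -> V)
    (l : V -> 'I_N) : Prop :=
  (forall w : V, w != root -> par w != root -> l (par (par w)) != l w) /\
  (forall v : V, v \in edges root ->
     exists2 v' : V, (v' \in edges root) && (v' != v) &
        edge_has_labels par l v' (l v) (l (par v))).

(* |V(T)| : number of distinct labels used *)
Definition nlabels (V : finType) (N : nat) (l : V -> 'I_N) : nat :=
  #|[set l v | v : V]|.

Definition nedges (V : finType) (root : V) : nat := #|edges root|.

Definition Delta (V : finType) (N : nat) (root : V) (l : V -> 'I_N) : rat :=
  ((nedges root)%:R / 2 - (nlabels l)%:R + 1)%R.

Definition bcount (V : finType) (N : nat) (root : V) (par : V -> V)
    (l : V -> 'I_N) (i j : 'I_N) : nat :=
  #|[set v in edges root | edge_has_labels par l v i j]|.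

From mathcomp Require Import all_boot all_order all_algebra.
From mathcomp Require Import zify lra.
Import Order.TTheory GRing.Theory Num.Theory.
Set Implicit Arguments. Unset Strict Implicit.

(* Every edge label pair that occurs at all occurs at least twice, so
   [b + 6 <= 3 b] whenever [b > 2] and [6 <= 3 b] whenever [b = 2]; summing over
   the pairs in use gives [sum_{b > 2} b + 6 #pairs <= 3 |E|].  On the other
   hand every label other than the root's is the label of a deepest vertex
   carrying it, and the label pair of the edge above that vertex determines the
   label (a swapped pair would make each of two deepest vertices strictly
   deeper than the other), so [|V| <= #pairs + 1].  Combining the two gives
   [sum_{b > 2} b <= 3 |E| - 6 |V| + 6 = 6 Delta].  Only the levels and
   condition (ii) of admissibility are used. *)

Definition upair {N : nat} (a b : 'I_N) : 'I_N * 'I_N :=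
  if (a <= b)%N then (a, b) else (b, a).

Lemma upair_sorted N (a b : 'I_N) : ((upair a b).1 <= (upair a b).2)%N.
Proof. by rewrite /upair; case: (leqP a b) => // /ltnW. Qed.

Lemma upairC N (a b : 'I_N) : upair a b = upair b a.
Proof.
rewrite /upair; case: (ltngtP a b) => // eab.
by rewrite (val_inj eab).
Qed.

Lemma upair_inj N (a b c d : 'I_N) :
  upair a b = upair c d -> (a = c /\ b = d) \/ (a = d /\ b = c).
Proof. by rewrite /upair; do 2!case: ifP => _; case=> -> ->; [left|right|right|left]. Qed.

Lemma upair_eqE N (a b : 'I_N) (p : 'I_N * 'I_N) : (p.1 <= p.2)%N ->
  ((a == p.1) && (b == p.2)) || ((a == p.2) && (b == p.1)) = (upair a b == p).
Proof.
case: p => x y /= lexy; apply/idP/eqP => [|].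
- by case/orP=> /andP[/eqP-> /eqP->]; [|rewrite upairC]; rewrite /upair lexy.
- by rewrite /upair; case: ifP => _ [<- <-]; rewrite !eqxx ?orbT.
Qed.

Definition edge_labels_paired {V : finType} {N : nat} (root : V) (par : V -> V)
    (l : V -> 'I_N) : Prop :=
  forall v : V, v \in edges root ->
    exists2 v' : V, (v' \in edges root) && (v' != v) &
      edge_has_labels par l v' (l v) (l (par v)).

Section LabeledTree.
Variables (V : finType) (N : nat) (root : V) (par : V -> V) (l : V -> 'I_N).

Definition edge_pair (v : V) : 'I_N * 'I_N := upair (l v) (l (par v)).

Definition used_pairs : {set 'I_N * 'I_N} :=
  [set p : 'I_N * 'I_N | (p.1 <= p.2)%N && (0 < bcount root par l p.1 p.2)%N].

Lemma bcountE (p : 'I_N * 'I_N) : (p.1 <= p.2)%N ->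
  bcount root par l p.1 p.2 = #|[set v in edges root | edge_pair v == p]|.
Proof.
by move=> lep; apply: eq_card => v; rewrite !inE /edge_has_labels upair_eqE.
Qed.

Lemma sum_bcount :
  (\sum_(p : 'I_N * 'I_N | (p.1 <= p.2)%N) bcount root par l p.1 p.2)%N
  = nedges root.
Proof.
rewrite /nedges -sum1_card (partition_big edge_pair (fun p => p.1 <= p.2)%N);
  last by move=> v _; apply: upair_sorted.
apply: eq_bigr => p lep; rewrite bcountE // sum1dep_card.
by apply: eq_card => v; rewrite !inE.
Qed.

Lemma bcount_ge2 (p : 'I_N * 'I_N) :
  edge_labels_paired root par l -> (p.1 <= p.2)%N ->
  (0 < bcount root par l p.1 p.2)%N -> (2 <= bcount root par l p.1 p.2)%N.
Proof.
move=> paired lep; rewrite bcountE // card_gt0.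
case/set0Pn=> v; rewrite inE => /andP[vE /eqP vp].
have [v' /andP[v'E v'v] v'lab] := paired v vE.
have v'p : edge_pair v' = p.
  by rewrite -vp /edge_pair; case/orP: v'lab => /andP[/eqP-> /eqP->]; rewrite // upairC.
apply/card_gt1P; exists v, v'.
by move: vE v'E; rewrite !inE => -> ->; rewrite vp v'p eqxx eq_sym.
Qed.

Lemma bcount_big_le :
  edge_labels_paired root par l ->
  ((\sum_(p : 'I_N * 'I_N | (p.1 <= p.2)%N && (2 < bcount root par l p.1 p.2)%N)
      bcount root par l p.1 p.2) + 6 * #|used_pairs| <= 3 * nedges root)%N.
Proof.
move=> paired; rewrite -sum_bcount big_distrr big_mkcondr /=.
have -> : (6 * #|used_pairs|
    = \sum_(p : 'I_N * 'I_N | (p.1 <= p.2)%N)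
        if (0 < bcount root par l p.1 p.2)%N then 6 else 0)%N.
  rewrite -big_mkcondr sum_nat_const mulnC; congr (_ * _)%N.
  by apply: eq_card => p; rewrite !inE.
rewrite -big_split; apply: leq_sum => p lep /=.
have := bcount_ge2 paired lep.
by case: (bcount _ _ _ _ _) => [|[|[|b]]] //= ge2; lia.
Qed.

Section Deepest.
Variables (t : nat) (lev : V -> nat).
Hypothesis leveled : is_leveling root par t lev.

(* [root] is a junk value, only returned for labels that are not used. *)
Definition deepest (c : 'I_N) : V :=
  odflt root [pick v | (l v == c) && [forall w, (l w == c) ==> (lev w <= lev v)%N]].

Lemma deepestP [c : 'I_N] : c \in [set l v | v : V] ->
  l (deepest c) = c /\ forall w, l w = c -> (lev w <= lev (deepest c))%N.
Proof.
case/imsetP=> v0 _ ->; rewrite /deepest; case: pickP => [v /andP[/eqP-> /forallP max]|none] /=.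
  by split=> // w wc; have := max w; rewrite wc eqxx.
have [v vc vmax] := @arg_maxnP _ v0 (fun v => l v == l v0) lev (eqxx _).
have := none v; rewrite vc /=; move/negbT/forallPn=> [w].
by rewrite negb_imply => /andP[/vmax le_wv /negP].
Qed.

Lemma deepest_non_root [c : 'I_N] :
  c \in [set l v | v : V] -> c != l root -> deepest c != root.
Proof. by move=> /deepestP[dc _]; apply: contraNneq => <-; rewrite dc. Qed.

Lemma edge_pair_deepest_inj :
  {in [set l v | v : V] :\ l root &, injective (edge_pair \o deepest)}.
Proof.
move=> c c' /setD1P[cr cL] /setD1P[c'r c'L] /upair_inj.
have [dc dmax] := deepestP cL; have [dc' dmax'] := deepestP c'L.
rewrite dc dc' => -[[]//|[c_at_par c'_at_par]].
have := dmax _ (esym c_at_par); have := dmax' _ c'_at_par.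
rewrite leveled.2 ?leveled.2 ?deepest_non_root //.
lia.
Qed.

Lemma nlabels_le_used_pairs : (nlabels l <= #|used_pairs| + 1)%N.
Proof.
have rootL : l root \in [set l v | v : V] by apply: imset_f.
rewrite /nlabels (cardsD1 (l root)) rootL addnC leq_add2r.
rewrite -(card_in_imset edge_pair_deepest_inj); apply: subset_leq_card.
apply/subsetP=> _ /imsetP[c /setD1P[cr cL] ->].
rewrite inE upair_sorted bcountE ?upair_sorted //=; apply/card_gt0P.
by exists (deepest c); rewrite !inE deepest_non_root ?eqxx.
Qed.

End Deepest.
End LabeledTree.

Theorem lemma2p12 (V : finType) (N : nat) (root : V) (par : V -> V)
    (t : nat) (lev : V -> nat) (l : V -> 'I_N) :
  is_rooted_tree root par ->
  is_leveling root par t lev ->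
  admissible root par l ->
  ((\sum_(p : 'I_N * 'I_N | (p.1 <= p.2)%N && (2 < bcount root par l p.1 p.2)%N)
      (bcount root par l p.1 p.2)%:R : rat)
   <= 6 * Delta root l)%R.
Proof.
move=> _ leveled [_ paired].
have big_le := bcount_big_le paired.
have labels_le := nlabels_le_used_pairs l leveled.
set T := (\sum_(p | _) bcount _ _ _ _ _)%N in big_le.
have : ((T + 6 * nlabels l)%:R <= (3 * nedges root + 6)%:R :> rat)%R.
  by rewrite ler_nat; lia.
rewrite -natr_sum -/T /Delta !natrD.
lra.
Qed.
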